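(* Let $a>0$. The frame $e=\{e_0,e_1,e_2,e_3,e_4\}$ on $B_a^>$ defined by $e_0=\frac{\partial}{\partial x_0}-\frac{2x_0}{r}\cdot\frac{a^4r_o^2}{1+\beta}\,T$, $e_1=\frac{\partial}{\partial r}+\frac{r^2+x_0^2}{r^2}\cdot\frac{a^4r_o^2}{1+\beta}\,T$, $e_2=r^{-1}\frac{\partial}{\partial\sigma_1}$, $e_3=r^{-1}\frac{\partial}{\partial\sigma_2}$, $e_4=(r\beta)^{-1}\frac{\partial}{\partial\sigma_3}$, where $T=-(r^2+x_0^2)\frac{\partial}{\partial r}-2rx_0\frac{\partial}{\partial x_0}$, is a pointwise $g_a$-orthonormal frame on $B_a^>$ and is of class $C^1$.
   Context: On $\mathbb{R}^5$ use coordinates $x=(x_0,\dots,x_4)$, $r=\sqrt{x_1^2+x_2^2+x_3^2+x_4^2}$, Minkowski metric $g_0=-dx_0^2+\sum_{i=1}^4dx_i^2$. On $\{r>0\}$ define $\sigma_1=\frac{1}{r^2}(-x_2dx_1+x_1dx_2-x_4dx_3+x_3dx_4)$, $\sigma_2=\frac{1}{r^2}(-x_3dx_1+x_4dx_2+x_1dx_3-x_2dx_4)$, $\sigma_3=\frac{1}{r^2}(-x_4dx_1-x_3dx_2+x_2dx_3+x_1dx_4)$, so $g_0=-dx_0^2+dr^2+r^2(\sigma_1^2+\sigma_2^2+\sigma_3^2)$. The vector fields $\frac{\partial}{\partial\sigma_i}$ ($i=1,2,3$) on $\{r>0\}$ are the ones annihilated by $dx_0$ and $dr$ with $\sigma_j(\frac{\partial}{\partial\sigma_i})=\delta_{ij}$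 (the frame dual to $\sigma_1,\sigma_2,\sigma_3$ along the spheres), and $\frac{\partial}{\partial r}$, $\frac{\partial}{\partial x_0}$ are the coordinate fields of the cylindrical coordinates $(x_0,r,\text{point of }S^3)$. Let $L=\{r\le|x_0|\}$, $L_o=\{r=|x_0|\}$; $r_o=0$ on $L$ and $r_o=(r^2-x_0^2)/r$ elsewhere. For $a>0$: $B_a=\{0<r_o<1/a\}$, $\tilde{B}_a=B_a\cup L$, $B_a^>=\tilde{B}_a\setminus\{r=0\}$, $\beta=\sqrt{1-(ar_o)^4}$, $\alpha=(r^2+x_0^2)dr-2x_0r\,dx_0$, and $g_a=g_0-r^2(ar_o)^4\sigma_3^2+a^4(r\beta)^{-2}r_o^2\alpha^2$ on $B_a^>$, $g_a=g_0$ on $\{r=0\}$. Orthonormal means $g_a(e_0,e_0)=-1$, $g_a(e_i,e_i)=1$ for $i\ge1$, $g_a(e_i,e_j)=0$ for $i\ne j$. *)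

From mathcomp Require Import all_boot all_order all_algebra.
From mathcomp Require Import all_classical all_reals all_analysis.
Set Implicit Arguments. Unset Strict Implicit. Unset Printing Implicit Defensive.
Import Order.TTheory GRing.Theory Num.Theory.
Import numFieldNormedType.Exports.
Local Open Scope classical_set_scope.
Local Open Scope ring_scope.

Section Defs.
Variable R : realType.
Notation V := 'rV[R]_5.

Definition xc (x : V) (i : nat) : R := x ord0 (inord i).

Definition rad (x : V) : R :=
  Num.sqrt (xc x 1 ^+ 2 + xc x 2 ^+ 2 + xc x 3 ^+ 2 + xc x 4 ^+ 2).

Definition Lcone : set V := [set x | rad x <= `|xc x 0|].

Definition r_o (x : V) : R :=
  if rad x <= `|xc x 0| then 0 else (rad x ^+ 2 - xc x 0 ^+ 2) / rad x.

Definition B_a (a : R) : set V := [set x | 0 < r_o x < a^-1].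
Definition Bt_a (a : R) : set V := B_a a `|` Lcone.
Definition Bgt_a (a : R) : set V := Bt_a a `\` [set x | rad x = 0].

Definition beta (a : R) (x : V) : R := Num.sqrt (1 - (a * r_o x) ^+ 4).

(* one-forms at the point x, evaluated on the tangent vector v *)
Definition dx0 (x v : V) : R := xc v 0.
Definition dr (x v : V) : R :=
  (xc x 1 * xc v 1 + xc x 2 * xc v 2 + xc x 3 * xc v 3 + xc x 4 * xc v 4) / rad x.
Definition sigma1 (x v : V) : R :=
  (- xc x 2 * xc v 1 + xc x 1 * xc v 2 - xc x 4 * xc v 3 + xc x 3 * xc v 4) / rad x ^+ 2.
Definition sigma2 (x v : V) : R :=
  (- xc x 3 * xc v 1 + xc x 4 * xc v 2 + xc x 1 * xc v 3 - xc x 2 * xc v 4) / rad x ^+ 2.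
Definition sigma3 (x v : V) : R :=
  (- xc x 4 * xc v 1 - xc x 3 * xc v 2 + xc x 2 * xc v 3 + xc x 1 * xc v 4) / rad x ^+ 2.
Definition alpha (x v : V) : R :=
  (rad x ^+ 2 + xc x 0 ^+ 2) * dr x v - 2 * xc x 0 * rad x * dx0 x v.

Definition g0 (v w : V) : R :=
  - xc v 0 * xc w 0 + xc v 1 * xc w 1 + xc v 2 * xc w 2
  + xc v 3 * xc w 3 + xc v 4 * xc w 4.

Definition g_a (a : R) (x v w : V) : R :=
  if rad x == 0 then g0 v w else
  g0 v w - rad x ^+ 2 * (a * r_o x) ^+ 4 * (sigma3 x v * sigma3 x w)
  + a ^+ 4 * (rad x * beta a x) ^-2 * r_o x ^+ 2 * (alpha x v * alpha x w).

(* The coordinate fields d/dx0, d/dr of the cylindrical coordinates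
   (x0, r, point of S^3) and the fields d/dsigma_i: together they form the
   frame dual to the coframe (dx0, dr, sigma1, sigma2, sigma3) on {r > 0}. *)
Definition dual_frame (Dx0 Dr D1 D2 D3 : V -> V) : Prop :=
  forall x : V, 0 < rad x ->
  let forms := [:: dx0 x; dr x; sigma1 x; sigma2 x; sigma3 x] in
  let fields := [:: Dx0 x; Dr x; D1 x; D2 x; D3 x] in
  forall i j : 'I_5,
    (nth (dx0 x) forms j) (nth (Dx0 x) fields i) = (i == j)%:R.

Definition Tfield (Dx0 Dr : V -> V) (x : V) : V :=
  (- (rad x ^+ 2 + xc x 0 ^+ 2)) *: Dr x - (2 * rad x * xc x 0) *: Dx0 x.

Definition coefT (a : R) (x : V) : R := a ^+ 4 * r_o x ^+ 2 / (1 + beta a x).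

Definition frame (a : R) (Dx0 Dr D1 D2 D3 : V -> V) (k : 'I_5) (x : V) : V :=
  match val k with
  | 0 => Dx0 x - (2 * xc x 0 / rad x * coefT a x) *: Tfield Dx0 Dr x
  | 1 => Dr x + ((rad x ^+ 2 + xc x 0 ^+ 2) / rad x ^+ 2 * coefT a x)
                 *: Tfield Dx0 Dr x
  | 2 => (rad x)^-1 *: D1 x
  | 3 => (rad x)^-1 *: D2 x
  | _ => (rad x * beta a x)^-1 *: D3 x
  end.

Definition orthonormal_at (g : V -> V -> R) (e : 'I_5 -> V) : Prop :=
  forall i j : 'I_5,
    g (e i) (e j) = if i == j then (if val i == 0%N then -1 else 1) else 0.

Definition C1_on (A : set V) (f : V -> V) : Prop :=
  (forall x, A x -> differentiable f x) /\
  (forall (k : 'I_5) x, A x ->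
     {for x, continuous (fun y => 'D_(delta_mx ord0 k : V) f y)}).

End Defs.

From Pilot Require Import Defs.
From HB Require Import structures.
From mathcomp Require Import all_boot all_order all_algebra.
From mathcomp Require Import all_classical all_reals all_analysis.
From mathcomp Require Import ring.
Import Order.TTheory GRing.Theory Num.Theory.
Import numFieldNormedType.Exports.
Import Defs.
Local Open Scope classical_set_scope.
Local Open Scope ring_scope.

(* Let theta = (dx0, dr, sigma1, sigma2, sigma3).  Where r > 0, every vector v
   is sum_i theta_i(v) F_i for explicit cylindrical fields F_i (built from x / r
   and the three quaternionic rotations of x), so the dual-frame hypothesis
   forces D_i = F_i there.  In the coordinates theta the metric g_a is
   - th0^2 + th1^2 + r^2 (th2^2 + th3^2 + beta^2 th4^2) + a^4 r_o^2 / (r beta)^2 alpha^2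
   and the frame has explicit coordinates; orthonormality reduces to the single
   relation k (A^2 - B^2) = 1 - beta for k = coefT / r^2, A = r^2 + x0^2 and
   B = 2 r x0, which holds because (r^2 - x0^2)^2 = (r r_o)^2 off the cone L and
   beta^2 = 1 - (a r_o)^4.
   The function r_o is not C^1 across the light cone, but
   r_o^2 = max(r^2 - x0^2, 0)^2 / r^2 is; hence so are beta, coefT and the
   components of the explicit frame near each point of B_a^>, where r > 0 and
   a r_o < 1. *)

Section sqr_pos_part.
Context {R : realType}.

Definition sqr_pos_part (s : R) := Num.max s 0 ^+ 2.

Lemma sqr_pos_partE (s : R) : sqr_pos_part s = s * Num.max s 0.
Proof.
rewrite /sqr_pos_part.
by have [s0|s0] := leP s 0; rewrite ?max_r ?max_l ?ltW ?mulr0 ?expr0n.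
Qed.

Lemma continuous_max0 : continuous (fun s : R => Num.max s 0).
Proof. by move=> s; apply: continuous_max; [exact: cvg_id | exact: cvg_cst]. Qed.

Lemma is_derive_sqr_pos_part (s : R) :
  is_derive s 1 sqr_pos_part (2 * Num.max s 0).
Proof.
have [s0|s0|->] := ltgtP s 0.
- rewrite mulr0; apply: (@near_eq_is_derive _ _ _ (cst (0 : R))).
  near=> t; rewrite /sqr_pos_part max_r ?expr0n //.
  by apply: ltW; near: t; exact: lt_nbhsl.
- apply: (@near_eq_is_derive _ _ _ (@GRing.exp R ^~ 2)).
    near=> t; rewrite /sqr_pos_part max_l // ltW //.
    by near: t; exact: lt_nbhsr.
  apply: DeriveDef; first exact: (@exprn_derivable R 2 s 1).
  by rewrite exp_derive expr1 /GRing.scale /=; ring.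
- rewrite mulr0.
  have q : (fun h : R => h^-1 *: (sqr_pos_part (h *: 1 + 0) - sqr_pos_part 0))
      @ 0^' --> (0 : R).
    apply: (@cvg_trans _ ((fun h : R => Num.max h 0) @ 0^')).
      apply: near_eq_cvg; near=> h.
      have h0 : h != 0 by near: h; exact: nbhs_dnbhs_neq.
      rewrite addr0 [h *: 1]mulr1 !sqr_pos_partE mul0r subr0 /GRing.scale /=.
      by rewrite mulKf.
    have := continuous_max0 0; rewrite /prop_for /continuous_at maxxx.
    exact: cvg_within_filter.
  by apply: DeriveDef; [apply/cvg_ex; exists 0 | exact: cvg_lim].
Unshelve. all: by end_near. Qed.

End sqr_pos_part.

Section C1_at.
Context {R : realType} {V : normedModType R}.

Lemma near_eq_continuous {T : topologicalType} (F G : V -> T) y :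
  (\forall z \near y, F z = G z) -> {for y, continuous G} ->
  {for y, continuous F}.
Proof.
move=> FG cG; rewrite /prop_for /continuous_at (nbhs_singleton FG).
by apply: cvg_trans cG; apply: near_eq_cvg; apply: filterS FG.
Qed.

Lemma near_eq_diff {W : normedModType R} (f g : V -> W) x :
  (\forall y \near x, f y = g y) -> differentiable g x ->
  differentiable f x /\ 'd f x = 'd g x :> (V -> W).
Proof.
move=> fg dg.
have fg0 : (f - g) \o shift x =o_ 0 id.
  have fg_near0 : \forall h \near (0 : V), f (h + x) = g (h + x).
    rewrite (near_shift x); apply: filterS fg => z /=.
    by rewrite sub0r -[in X in X -> _](subrK x z) addrC.
  apply/eqoP => e e0; apply: filterS fg_near0 => h fgh.
  by rewrite !fctE fgh subrr normr0 mulr_ge0 // ltW.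
have E : f \o shift x = cst (f x) + 'd g x +o_ 0 id.
  have -> : f \o shift x = (g \o shift x) + ((f - g) \o shift x).
    by apply/funext => h /=; rewrite !fctE addrC subrK.
  by rewrite (diff_locally dg) (nbhs_singleton fg) fg0 -addrA addo.
have dfE := diff_unique (diff_continuous dg) E.
split=> //; apply/diff_locallyP; rewrite dfE; split=> //.
exact: diff_continuous.
Qed.

Definition C1_at {W : normedModType R} (f : V -> W) (y : V) : Prop :=
  (\forall z \near y, differentiable f z) /\
  forall v, {for y, continuous (fun z => 'd f z v)}.

Lemma C1_at_continuous {W : normedModType R} (f : V -> W) y :
  C1_at f y -> {for y, continuous f}.
Proof. by case=> /nbhs_singleton /differentiable_continuous. Qed.

Lemma C1_at_derive {W : normedModType R} (f : V -> W) x : C1_at f x ->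
  differentiable f x /\ forall v, {for x, continuous ('D_v f)}.
Proof.
move=> [df cf]; split=> [|v]; first exact: nbhs_singleton df.
apply: near_eq_continuous (cf v).
by apply: filterS df => z dfz; rewrite deriveE.
Qed.

Lemma near_eq_C1_at {W : normedModType R} (f g : V -> W) y :
  (\forall z \near y, f z = g z) -> C1_at g y -> C1_at f y.
Proof.
move=> fg [dg cg].
have fgd : \forall z \near y, differentiable f z /\ 'd f z = 'd g z :> (V -> W).
  by apply: filterS2 (near_join fg) dg => z; exact: near_eq_diff.
split; first by apply: filterS fgd => z [].
move=> v; apply: near_eq_continuous (cg v).
by apply: filterS fgd => z [_ ->].
Qed.

Lemma C1_at_cst {W : normedModType R} (w : W) y : C1_at (cst w) y.
Proof.
split; first by near=> z; exact: differentiable_cst.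
move=> v; rewrite (_ : (fun z => _) = cst 0); first exact: cvg_cst.
by apply/funext => z; rewrite diff_cst.
Unshelve. all: by end_near. Qed.

Lemma C1_at_linear {W : normedModType R} (f : {linear V -> W}) y :
  continuous f -> C1_at f y.
Proof.
move=> fc; split; first by near=> z; exact: linear_differentiable.
move=> v; rewrite (_ : (fun z => _) = cst (f v)); first exact: cvg_cst.
by apply/funext => z; rewrite diff_lin.
Unshelve. all: by end_near. Qed.

Lemma C1_atD {W : normedModType R} (f g : V -> W) y :
  C1_at f y -> C1_at g y -> C1_at (fun z => f z + g z) y.
Proof.
move=> [df cf] [dg cg].
split; first by apply: filterS2 df dg => z; exact: differentiableD.
move=> v; apply: (@near_eq_continuous _ _ (fun z => 'd f z v + 'd g z v)).
  by apply: filterS2 df dg => z dfz dgz; rewrite diffD.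
exact: cvgD (cf v) (cg v).
Qed.

Lemma C1_atN {W : normedModType R} (f : V -> W) y :
  C1_at f y -> C1_at (fun z => - f z) y.
Proof.
move=> [df cf]; split; first by apply: filterS df => z; exact: differentiableN.
move=> v; apply: (@near_eq_continuous _ _ (fun z => - 'd f z v)).
  by apply: filterS df => z dfz; rewrite diffN.
exact: cvgN (cf v).
Qed.

Lemma C1_atZl {W : normedModType R} (k : V -> R) (w : W) y :
  C1_at k y -> C1_at (fun z => k z *: w) y.
Proof.
move=> [dk ck]; split; first by apply: filterS dk => z; exact: differentiableZl.
move=> v; apply: (@near_eq_continuous _ _ (fun z => 'd k z v *: w)).
  by apply: filterS dk => z dkz; rewrite diffZl.
by apply: cvgZ; [exact: ck | exact: cvg_cst].
Qed.

Lemma C1_at_sum {W : normedModType R} n (F : 'I_n -> V -> W) y :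
  (forall i, C1_at (F i) y) -> C1_at (\sum_(i < n) F i) y.
Proof.
move=> CF; elim/big_ind: _ => [|f g|i _];
  [exact: C1_at_cst | exact: C1_atD | exact: CF].
Qed.

Lemma C1_at_row n (f : V -> 'rV[R]_n) y :
  (forall j, C1_at (fun z => f z ord0 j) y) -> C1_at f y.
Proof.
move=> Cf; have -> : f = \sum_(j < n) (fun z => f z ord0 j *: delta_mx 0 j).
  by apply/funext => z; rewrite fct_sumE [LHS]row_sum_delta.
by apply: C1_at_sum => j; exact: C1_atZl.
Qed.

Lemma C1_atM (f g : V -> R) y :
  C1_at f y -> C1_at g y -> C1_at (fun z => f z * g z) y.
Proof.
move=> Cf Cg; have [df cf] := Cf; have [dg cg] := Cg.
split; first by apply: filterS2 df dg => z; exact: differentiableM.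
move=> v; apply: (@near_eq_continuous _ _
    (fun z => f z * 'd g z v + g z * 'd f z v)).
  by apply: filterS2 df dg => z dfz dgz; rewrite diffM.
have /C1_at_continuous fc := Cf; have /C1_at_continuous gc := Cg.
exact: cvgD (cvgM fc (cg v)) (cvgM gc (cf v)).
Qed.

Lemma C1_atX (f : V -> R) n y : C1_at f y -> C1_at (fun z => f z ^+ n) y.
Proof.
move=> Cf; elim: n => [|n IHn]; first exact: C1_at_cst.
under eq_fun => z do rewrite exprS.
exact: C1_atM.
Qed.

Lemma C1_at_near_neq0 (f : V -> R) y :
  C1_at f y -> f y != 0 -> \forall z \near y, f z != 0.
Proof.
move=> /C1_at_continuous /cvg_norm fy fy0.
have : \forall z \near y, 0 < `|f z| by apply: (cvgr_gt _ fy); rewrite normr_gt0.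
by apply: filterS => z; rewrite normr_gt0.
Qed.

Lemma C1_atV (f : V -> R) y :
  C1_at f y -> f y != 0 -> C1_at (fun z => (f z)^-1) y.
Proof.
move=> Cf fy0; have [df cf] := Cf.
have f0 : \forall z \near y, f z != 0 by exact: C1_at_near_neq0.
split; first by apply: filterS2 df f0 => z; exact: differentiableV.
move=> v; apply: (@near_eq_continuous _ _ (fun z => - (f z) ^- 2 * 'd f z v)).
  by apply: filterS2 df f0 => z dfz fz0; rewrite diffV.
have /C1_at_continuous fc := Cf.
apply: cvgM; last exact: cf.
by apply: cvgN; apply: cvgV; [rewrite expf_neq0 | exact: cvgM].
Qed.

Lemma C1_at_comp (h h' : R -> R) (f : V -> R) y :
  (\forall t \near f y, is_derive t (1 : R) h (h' t)) ->
  {for f y, continuous h'} ->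
  C1_at f y -> C1_at (fun z => h (f z)) y.
Proof.
move=> dh ch Cf; have [df cf] := Cf; have /C1_at_continuous fc := Cf.
have dhf : \forall z \near y, is_derive (f z) (1 : R) h (h' (f z)) := fc _ dh.
have dhf' : \forall z \near y, differentiable h (f z).
  by apply: filterS dhf => z dhz; apply/derivable1_diffP; exact: ex_derive.
split; first by apply: filterS2 df dhf' => z; exact: differentiable_comp.
move=> v; apply: (@near_eq_continuous _ _ (fun z => 'd f z v * h' (f z))).
  apply: filterS3 df dhf dhf' => z dfz dhz dhz'.
  by case: dhz => dh1 dv; rewrite diff_comp //= deriv1E // derive1E dv.
apply: cvgM; first exact: cf.
exact: continuous_comp fc ch.
Qed.

Lemma C1_at_sqrt (f : V -> R) y :
  0 < f y -> C1_at f y -> C1_at (fun z => Num.sqrt (f z)) y.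
Proof.
move=> fy0; apply: (@C1_at_comp _ (fun t => (2 * Num.sqrt t)^-1)).
  by near=> t; apply: is_derive1_sqrt; near: t; exact: lt_nbhsr.
apply: cvgV; first by rewrite mulf_neq0 // gt_eqF // sqrtr_gt0.
by apply: cvgM; [exact: cvg_cst | exact: sqrt_continuous].
Unshelve. all: by end_near. Qed.

Lemma C1_at_sqr_pos_part (f : V -> R) y :
  C1_at f y -> C1_at (fun z => sqr_pos_part (f z)) y.
Proof.
apply: (@C1_at_comp _ (fun s => 2 * Num.max s 0)).
  by near=> t; exact: is_derive_sqr_pos_part.
by apply: cvgM; [exact: cvg_cst | exact: continuous_max0].
Unshelve. all: by end_near. Qed.

End C1_at.

Section Frame.
Context {R : realType}.
Notation V := 'rV[R]_5.
Implicit Types x y z v w : V.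

Definition Ssq x := xc x 1 ^+ 2 + xc x 2 ^+ 2 + xc x 3 ^+ 2 + xc x 4 ^+ 2.

Lemma rad_sqr x : rad x ^+ 2 = Ssq x.
Proof. by rewrite /rad sqr_sqrtr // !addr_ge0 // sqr_ge0. Qed.

Lemma xcE v (j : 'I_5) : v ord0 j = xc v j.
Proof. by rewrite /xc inord_val. Qed.

Definition coframe x v : V :=
  \row_(j < 5) nth (dx0 x) [:: dx0 x; dr x; sigma1 x; sigma2 x; sigma3 x] j v.

Lemma coframe_is_linear x : linear (coframe x).
Proof.
move=> c u w; apply/rowP => j; rewrite !mxE.
case: j => [[|[|[|[|[|j]]]]] hj] //=;
  rewrite /dx0 /dr /sigma1 /sigma2 /sigma3 /xc !mxE; ring.
Qed.

HB.instance Definition _ x :=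
  GRing.isLinear.Build R V V *:%R (coframe x) (coframe_is_linear x).

Definition cyl_field (i : nat) x : V :=
  \row_(j < 5) nth 0 (nth [::]
   [:: [:: 1; 0; 0; 0; 0];
       [:: 0; xc x 1 / rad x; xc x 2 / rad x; xc x 3 / rad x; xc x 4 / rad x];
       [:: 0; - xc x 2; xc x 1; - xc x 4; xc x 3];
       [:: 0; - xc x 3; xc x 4; xc x 1; - xc x 2];
       [:: 0; - xc x 4; - xc x 3; xc x 2; xc x 1]] i) j.

(* The spatial parts of the last four fields are orthogonal, of squared length
   1 or Ssq x, so each coordinate identity becomes polynomial once multiplied
   by rad x ^+ 2 = Ssq x. *)
Lemma coframe_expansion x v : 0 < rad x ->
  v = \sum_(i < 5) coframe x v ord0 i *: cyl_field i x.
Proof.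
move=> hx; have r0 : rad x != 0 by rewrite gt_eqF.
apply/rowP => j; rewrite xcE summxE !big_ord_recr big_ord0 /= !mxE.
case: j => [[|[|[|[|[|j]]]]] hj] //=; first by rewrite /dx0; ring.
all: apply: (mulfI (expf_neq0 2 r0)); rewrite [in LHS]rad_sqr /Ssq.
all: by rewrite /dr /sigma1 /sigma2 /sigma3; field.
Qed.

Lemma g0_coframe x v w : 0 < rad x ->
  g0 v w = - dx0 x v * dx0 x w + dr x v * dr x w
    + rad x ^+ 2 * (sigma1 x v * sigma1 x w + sigma2 x v * sigma2 x w
                    + sigma3 x v * sigma3 x w).
Proof.
move=> hx; have r0 : rad x != 0 by rewrite gt_eqF.
transitivity (- xc v 0 * xc w 0 + (rad x ^+ 2)^-1 * (Ssq x *
  (xc v 1 * xc w 1 + xc v 2 * xc w 2 + xc v 3 * xc w 3 + xc v 4 * xc w 4))).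
  by rewrite -rad_sqr mulKf ?expf_neq0 // /g0; ring.
by rewrite /Ssq /dx0 /dr /sigma1 /sigma2 /sigma3; field.
Qed.

Definition coframe_metric (r x0 c m : R) (p q : V) : R :=
  - xc p 0 * xc q 0 + xc p 1 * xc q 1
  + r ^+ 2 * (xc p 2 * xc q 2 + xc p 3 * xc q 3 + c * (xc p 4 * xc q 4))
  + m * (((r ^+ 2 + x0 ^+ 2) * xc p 1 - 2 * x0 * r * xc p 0)
         * ((r ^+ 2 + x0 ^+ 2) * xc q 1 - 2 * x0 * r * xc q 0)).

Lemma g_a_coframe a x v w : 0 < rad x ->
  g_a a x v w = coframe_metric (rad x) (xc x 0) (1 - (a * r_o x) ^+ 4)
    (a ^+ 4 * (rad x * beta a x) ^-2 * r_o x ^+ 2) (coframe x v) (coframe x w).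
Proof.
move=> hx; rewrite /g_a gt_eqF // (g0_coframe _ _ _ hx) /coframe_metric /alpha.
by rewrite /xc !mxE !inordK //=; ring.
Qed.

Definition frame_coords (r x0 k b : R) (i : nat) : V :=
  let A := r ^+ 2 + x0 ^+ 2 in let B := 2 * r * x0 in
  \row_(j < 5) nth 0 (nth [::]
    [:: [:: 1 + k * B ^+ 2; k * A * B; 0; 0; 0];
        [:: - (k * A * B); 1 - k * A ^+ 2; 0; 0; 0];
        [:: 0; 0; r^-1; 0; 0];
        [:: 0; 0; 0; r^-1; 0];
        [:: 0; 0; 0; 0; (r * b)^-1]] i) j.

Lemma frame_coords_orthonormal (r x0 k b : R) :
  r != 0 -> b != 0 ->
  k * ((r ^+ 2 + x0 ^+ 2) ^+ 2 - (2 * r * x0) ^+ 2) = 1 - b ->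
  orthonormal_at (coframe_metric r x0 (b ^+ 2) (k * (1 + b) / b ^+ 2))
    (fun i : 'I_5 => frame_coords r x0 k b i).
Proof.
move=> r0 + hk.
have -> : b = 1 - k * ((r ^+ 2 + x0 ^+ 2) ^+ 2 - (2 * r * x0) ^+ 2).
  by rewrite hk; ring.
move=> b0 i j; rewrite /coframe_metric /frame_coords /xc !mxE !inordK //.
by case: i => [[|[|[|[|[|i]]]]] hi] //; case: j => [[|[|[|[|[|j]]]]] hj] //=;
  field; rewrite ?b0 ?r0.
Qed.

Lemma r_o_ge0 x : 0 <= r_o x.
Proof.
rewrite /r_o; case: (leP (rad x) `|xc x 0|) => // hL.
rewrite divr_ge0 ?sqrtr_ge0 // subr_ge0 -[xc x 0 ^+ 2]real_normK ?num_real //.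
by rewrite ler_pXn2r ?nnegrE ?normr_ge0 ?sqrtr_ge0 // ltW.
Qed.

Lemma r_o_sqr_mul x : 0 < rad x ->
  r_o x ^+ 2 * ((rad x ^+ 2 + xc x 0 ^+ 2) ^+ 2 - (2 * rad x * xc x 0) ^+ 2) =
  rad x ^+ 2 * r_o x ^+ 4.
Proof.
move=> hx; rewrite /r_o; case: ifP => _; first by rewrite !expr0n /= !mul0r mulr0.
by field; rewrite gt_eqF.
Qed.

Lemma r_o_sqr x : 0 < rad x ->
  r_o x ^+ 2 = sqr_pos_part (rad x ^+ 2 - xc x 0 ^+ 2) / rad x ^+ 2.
Proof.
move=> hx; rewrite /r_o /sqr_pos_part.
case: (leP (rad x) `|xc x 0|) => hL.
  rewrite max_r ?expr0n ?mul0r // subr_le0 -[xc x 0 ^+ 2]real_normK ?num_real //.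
  by rewrite ler_pXn2r ?nnegrE ?normr_ge0 ?sqrtr_ge0.
rewrite max_l; first by field; rewrite gt_eqF.
rewrite subr_ge0 -[xc x 0 ^+ 2]real_normK ?num_real //.
by rewrite ler_pXn2r ?nnegrE ?normr_ge0 ?sqrtr_ge0 // ltW.
Qed.

Lemma Bgt_a_rad_gt0 a x : Bgt_a a x -> 0 < rad x.
Proof. by move=> [_ /eqP r0]; rewrite lt0r r0 sqrtr_ge0. Qed.

Lemma Bgt_a_r_o_lt1 a x : 0 < a -> Bgt_a a x -> a * r_o x < 1.
Proof.
move=> ha [[/andP [_ hro] | hL] _]; first by rewrite mulrC -ltr_pdivlMr // div1r.
by rewrite /r_o ifT // mulr0.
Qed.

Lemma C1_at_xc (i : nat) y : C1_at (fun z : V => xc z i) y.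
Proof.
have xc_lin : linear (fun z : V => xc z i) by move=> c u v; rewrite /xc !mxE.
pose f : {linear V -> R} :=
  HB.pack (fun z : V => xc z i) (GRing.isLinear.Build _ _ _ _ _ xc_lin).
rewrite (_ : (fun _ => _) = f) //; apply: C1_at_linear; exact: coord_continuous.
Qed.

Ltac C1_at_decompose :=
  repeat match goal with
  | |- C1_at (fun _ => ?c) _ => apply: C1_at_cst
  | |- C1_at (fun z => xc z _) _ => apply: C1_at_xc
  | |- C1_at (fun z => @?f z + @?g z) _ => apply: (C1_atD f g)
  | |- C1_at (fun z => - @?f z) _ => apply: (C1_atN f)
  | |- C1_at (fun z => @?f z * @?g z) _ => apply: (C1_atM f g)
  | |- C1_at (fun z => @?f z ^+ _) _ => apply: (C1_atX f)
  | |- C1_at (fun z => (@?f z)^-1) _ => apply: (C1_atV f)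
  | |- C1_at (fun z => Num.sqrt (@?f z)) _ => apply: (C1_at_sqrt f)
  | |- C1_at (fun z => sqr_pos_part (@?f z)) _ => apply: (C1_at_sqr_pos_part f)
  end.

Lemma C1_at_rad y : 0 < rad y -> C1_at (@rad R) y.
Proof. by rewrite /rad => hy; C1_at_decompose; rewrite -sqrtr_gt0. Qed.

Lemma near_rad_gt0 y : 0 < rad y -> \forall z \near y, 0 < rad z.
Proof.
move=> hy; have /C1_at_continuous rc := C1_at_rad _ hy.
exact: cvgr_gt _ rc _ hy.
Qed.

Lemma C1_at_r_o_sqr y : 0 < rad y -> C1_at (fun z => r_o z ^+ 2) y.
Proof.
move=> hy; apply: (near_eq_C1_at _
    (fun z => sqr_pos_part (rad z ^+ 2 - xc z 0 ^+ 2) / rad z ^+ 2)).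
  by apply: filterS (near_rad_gt0 _ hy) => z; exact: r_o_sqr.
by C1_at_decompose; rewrite ?expf_neq0 ?gt_eqF //; exact: C1_at_rad.
Qed.

Section Beta.
Variables (a : R) (x : V).
Hypotheses (ha : 0 <= a) (hro : a * r_o x < 1) (hx : 0 < rad x).

Lemma beta_sqr : beta a x ^+ 2 = 1 - (a * r_o x) ^+ 4.
Proof.
by rewrite /beta sqr_sqrtr // subr_ge0 exprn_ile1 ?mulr_ge0 ?r_o_ge0 // ltW.
Qed.

Lemma beta_gt0 : 0 < beta a x.
Proof. by rewrite /beta sqrtr_gt0 subr_gt0 exprn_ilt1 ?mulr_ge0 ?r_o_ge0. Qed.

Lemma coefT_diff_sqr :
  coefT a x / rad x ^+ 2 *
    ((rad x ^+ 2 + xc x 0 ^+ 2) ^+ 2 - (2 * rad x * xc x 0) ^+ 2) = 1 - beta a x.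
Proof.
have b1 : 1 + beta a x != 0 by rewrite gt_eqF // addr_gt0 // beta_gt0.
have r0 : rad x != 0 by rewrite gt_eqF.
transitivity (a ^+ 4 * (r_o x ^+ 2 *
    ((rad x ^+ 2 + xc x 0 ^+ 2) ^+ 2 - (2 * rad x * xc x 0) ^+ 2))
    / (rad x ^+ 2 * (1 + beta a x))).
  by rewrite /coefT; field; rewrite r0 b1.
rewrite r_o_sqr_mul //.
have -> : a ^+ 4 * (rad x ^+ 2 * r_o x ^+ 4) = rad x ^+ 2 * (1 - beta a x ^+ 2).
  by rewrite beta_sqr; ring.
by field; rewrite r0 b1.
Qed.

Lemma C1_at_beta : C1_at (beta a) x.
Proof.
have e z : 1 - (a * r_o z) ^+ 4 = 1 - a ^+ 4 * (r_o z ^+ 2) ^+ 2 by ring.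
have -> : beta a = fun z => Num.sqrt (1 - a ^+ 4 * (r_o z ^+ 2) ^+ 2).
  by apply/funext => z; rewrite /beta e.
apply: C1_at_sqrt; first by rewrite -e -sqrtr_gt0; exact: beta_gt0.
apply: C1_atD; first exact: C1_at_cst.
apply: C1_atN; apply: C1_atM; first exact: C1_at_cst.
by apply: C1_atX; exact: C1_at_r_o_sqr.
Qed.

Lemma C1_at_coefT : C1_at (coefT a) x.
Proof.
apply: C1_atM; first by apply: C1_atM; [exact: C1_at_cst | exact: C1_at_r_o_sqr].
apply: C1_atV; first by apply: C1_atD; [exact: C1_at_cst | exact: C1_at_beta].
by rewrite gt_eqF // ltr_wpDr ?sqrtr_ge0.
Qed.

Lemma C1_at_frame_cyl (k : 'I_5) :
  C1_at (frame a (cyl_field 0) (cyl_field 1) (cyl_field 2) (cyl_field 3)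
           (cyl_field 4) k) x.
Proof.
apply: C1_at_row => j.
rewrite /frame /Tfield; case: k => [[|[|[|[|[|k]]]]] hk] //=;
  under eq_fun => z do rewrite /cyl_field !mxE;
  case: j => [[|[|[|[|[|j]]]]] hj] //=; C1_at_decompose.
all: match goal with
  | |- C1_at (fun z => rad z) _ => exact: C1_at_rad
  | |- C1_at (fun z => beta _ z) _ => exact: C1_at_beta
  | |- C1_at (fun z => coefT _ z) _ => exact: C1_at_coefT
  | |- _ => by rewrite ?mulf_neq0 ?expf_neq0 ?gt_eqF //; exact: beta_gt0
  end.
Qed.

End Beta.

Section DualFrame.
Variables Dx0 Dr D1 D2 D3 : V -> V.
Hypothesis hD : dual_frame Dx0 Dr D1 D2 D3.

Lemma coframe_dual_frame x (i : 'I_5) : 0 < rad x ->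
  coframe x (nth (Dx0 x) [:: Dx0 x; Dr x; D1 x; D2 x; D3 x] i) = delta_mx 0 i.
Proof. by move=> hx; apply/rowP => j; rewrite !mxE eqxx /= eq_sym; exact: hD. Qed.

Lemma dual_frame_cyl_field x (i : 'I_5) : 0 < rad x ->
  nth (Dx0 x) [:: Dx0 x; Dr x; D1 x; D2 x; D3 x] i = cyl_field i x.
Proof.
move=> hx; rewrite [LHS](coframe_expansion _ _ hx) coframe_dual_frame //.
rewrite (bigD1 i) //= mxE !eqxx scale1r big1 ?addr0 // => j ji.
by rewrite mxE eqxx (negbTE ji) scale0r.
Qed.

Lemma coframe_frame a x (k : 'I_5) : 0 < rad x ->
  coframe x (frame a Dx0 Dr D1 D2 D3 k x) =
  frame_coords (rad x) (xc x 0) (coefT a x / rad x ^+ 2) (beta a x) k.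
Proof.
move=> hx; have d i := @coframe_dual_frame x i hx.
rewrite /frame /Tfield; case: k => [[|[|[|[|[|k]]]]] hk] //=;
  do ![rewrite (raddfB (coframe x)) /= | rewrite (raddfD (coframe x)) /=
      | rewrite (raddfN (coframe x)) /= | rewrite linearZZ /=];
  rewrite ?(d ord0) ?(d (@Ordinal 5 1 isT)) ?(d (@Ordinal 5 2 isT))
    ?(d (@Ordinal 5 3 isT)) ?(d (@Ordinal 5 4 isT));
  apply/rowP => j; rewrite !mxE; case: j => [[|[|[|[|[|j]]]]] hj] //=;
  first [ring | by field; rewrite !gt_eqF].
Qed.

Lemma frame_orthonormal a x : 0 < a -> Bgt_a a x ->
  orthonormal_at (g_a a x) (fun k => frame a Dx0 Dr D1 D2 D3 k x).
Proof.
move=> ha hB; have /Bgt_a_rad_gt0 hx := hB.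
have hro : a * r_o x < 1 by apply: Bgt_a_r_o_lt1.
have hb0 := beta_gt0 a x (ltW ha) hro; have hb := beta_sqr a x (ltW ha) hro.
have -> : g_a a x = fun v w => coframe_metric (rad x) (xc x 0) (beta a x ^+ 2)
    (coefT a x / rad x ^+ 2 * (1 + beta a x) / beta a x ^+ 2)
    (coframe x v) (coframe x w).
  apply/funext => v; apply/funext => w; rewrite g_a_coframe // -hb /coefT.
  by congr coframe_metric; field; rewrite !gt_eqF ?addr_gt0.
move=> i j; rewrite !coframe_frame //.
apply: frame_coords_orthonormal; rewrite ?gt_eqF //.
exact: coefT_diff_sqr a x (ltW ha) hro hx.
Qed.

Lemma C1_at_frame a (k : 'I_5) x : 0 < a -> Bgt_a a x ->
  C1_at (frame a Dx0 Dr D1 D2 D3 k) x.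
Proof.
move=> ha hB; have /Bgt_a_rad_gt0 hx := hB.
have hro : a * r_o x < 1 by apply: Bgt_a_r_o_lt1.
apply: near_eq_C1_at (C1_at_frame_cyl a x (ltW ha) hro hx k).
apply: filterS (near_rad_gt0 _ hx) => z hz.
have e i := @dual_frame_cyl_field z i hz.
by rewrite /frame /Tfield -(e ord0) -(e (@Ordinal 5 1 isT))
  -(e (@Ordinal 5 2 isT)) -(e (@Ordinal 5 3 isT)) -(e (@Ordinal 5 4 isT)).
Qed.

End DualFrame.

End Frame.

Theorem lemma1 (R : realType) (a : R) (Dx0 Dr D1 D2 D3 : 'rV[R]_5 -> 'rV[R]_5) :
  0 < a ->
  dual_frame Dx0 Dr D1 D2 D3 ->
  (forall x : 'rV[R]_5, Bgt_a a x ->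
     orthonormal_at (g_a a x) (fun k => frame a Dx0 Dr D1 D2 D3 k x)) /\
  (forall k : 'I_5, C1_on (Bgt_a a) (frame a Dx0 Dr D1 D2 D3 k)).
Proof.
move=> ha hD; split=> [x hB | k]; first exact: frame_orthonormal.
have C1k x : Bgt_a a x -> C1_at (frame a Dx0 Dr D1 D2 D3 k) x.
  by move=> hB; exact: C1_at_frame.
split=> [x hB | j x hB]; have /C1_at_derive [dfx cfx] := C1k x hB.
- exact: dfx.
- exact: cfx.
Qed.
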